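(* Let $a,c,d,\gamma\in\mathbb{R}$ with $a>-1$, $a-\gamma c\ge -1$ and $\gamma>0$. If $n$ is an integer with $n\ge 1+\gamma^{-1}$, then $$\Big\lfloor \frac{\lceil a+c+nd\rceil}{n}\Big\rfloor\le \lceil a+d\rceil.$$ *)

From mathcomp Require Import all_boot all_order all_algebra.
Set Implicit Arguments. Unset Strict Implicit. Unset Printing Implicit Defensive.

(* Since c <= (a + 1) / g <= (a + 1) (n - 1), we get a + c + n d <= n (a + d + 1) - 1,
   hence ceil (a + c + n d) <= n (ceil (a + d) + 1) - 1 as the right-hand side is an
   integer; dividing by n leaves a quotient strictly below ceil (a + d) + 1. *)
From mathcomp Require Import all_boot all_order all_algebra.
From mathcomp Require Import lra.
Import Order.TTheory GRing.Theory Num.Theory.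
Local Open Scope ring_scope.

Lemma le_add1_mul_sub1 {R : realFieldType} {a c g N : R} :
  0 < g -> -1 <= a -> -1 <= a - g * c -> 1 + g^-1 <= N ->
  c <= (a + 1) * (N - 1).
Proof.
move=> g_gt0 a_ge hac hN.
have c_le : c <= (a + 1) / g by rewrite ler_pdivlMr // mulrC; lra.
apply: (le_trans c_le); rewrite ler_wpM2l //; lra.
Qed.

Lemma floor_divr_le (R : archiRealFieldType) (x N : R) (k : int) :
  0 < N -> x < N * (k + 1)%:~R -> Num.floor (x / N) <= k.
Proof.
by move=> N_gt0 x_lt; rewrite -ltzD1 floor_lt_int ltr_pdivrMr // mulrC.
Qed.

Theorem lemma1p3 (R : archiRealFieldType) (a c d g : R) (n : int)
  (ha : -1 < a) (hac : -1 <= a - g * c) (hg : 0 < g)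
  (hn : 1 + g^-1 <= n%:~R) :
  Num.floor ((Num.ceil (a + c + n%:~R * d))%:~R / n%:~R : R)
    <= Num.ceil (a + d).
Proof.
set N : R := n%:~R in hn *; set k := Num.ceil (a + d).
have ginv_gt0 : 0 < g^-1 by rewrite invr_gt0.
have N_gt1 : 1 < N by lra.
have hc := le_add1_mul_sub1 hg (ltW ha) hac hn.
have hk : N * (a + d) <= N * k%:~R by rewrite ler_pM2l ?ceil_ge //; lra.
have hceil : Num.ceil (a + c + N * d) <= n * (k + 1) - 1.
  by rewrite ceil_le_int intrB intrM -/N; nra.
apply: floor_divr_le; first lra.
by rewrite -intrM ltr_int (le_lt_trans hceil) // gtrBl.
Qed.
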